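(* Let $G$ be a finite connected graph with node set $V$. Define the binary relation $\preceq$ on $V$ by $u\preceq x$ if and only if $e(u)=d(u,x)+e(x)$. Then $\preceq$ is a partial order on $V$. Moreover, the set $U^{\preceq}$ of all maximal elements of this partial order is the unique tight upper certificate of $G$ of minimum size.
   Context: $d$ is the shortest-path distance in the (undirected, unweighted) graph $G$ and $e(u)=\max_{v\in V}d(u,v)$. For $U\subseteq V$, $e^U(v)=\min_{x\in U}(d(v,x)+e(x))$ ($+\infty$ if $U=\emptyset$). A tight upper certificate is a set $U\subseteq V$ such that $e^U(v)=e(v)$ for all $v\in V$. *)

From mathcomp Require Import all_boot.
Set Implicit Arguments. Unset Strict Implicit. Unset Printing Implicit Defensive.

(* A finite simple graph: vertex type T (finType), adjacency e : rel T,
   assumed symmetric and irreflexive in the theorem. *)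
Section Graph.
Variables (T : finType) (e : rel T).

Definition walkb (u v : T) (n : nat) : bool :=
  [exists p : n.-tuple T, path e u p && (last u p == v)].

(* shortest-path distance: least n with a walk of length n from u to v.
   In a connected graph such n exists and is < #|T|, so searching
   0 .. #|T|-1 gives the exact minimum. *)
Definition dist (u v : T) : nat := find (walkb u v) (iota 0 #|T|).

Definition ecc (u : T) : nat := \max_(v : T) dist u v.

(* e^U(v) = min_{x in U} (d(v,x) + e(x)); None encodes +infinity (U empty) *)
Definition eU (U : {set T}) (v : T) : option nat :=
  if [pick x in U] is Some x0 then
    Some (\big[minn/dist v x0 + ecc x0]_(x in U) (dist v x + ecc x))
  else None.

Definition tight_upper_certificate (U : {set T}) : Prop :=
  forall v : T, eU U v = Some (ecc v).

Definition prec (u x : T) : bool := ecc u == dist u x + ecc x.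

Definition Umax : {set T} := [set u | [forall x, prec u x ==> (x == u)]].

End Graph.

From mathcomp Require Import all_boot.
From mathcomp Require Import zify.

Set Implicit Arguments.
Unset Strict Implicit.
Unset Printing Implicit Defensive.

(* By the triangle inequality, e(u) <= d(u,x) + e(x) for all u and x, so
   u ⪯ x says that x is an optimal "relay" for the eccentricity of u, and
   e^U(v) = e(v) holds exactly when some x in U lies above v.  Antisymmetry
   and transitivity of ⪯ also come from the triangle inequality.  Every v lies
   below a maximal element (an x above v of least eccentricity), so U^⪯ is
   tight; conversely a maximal u lies below no other node, so any tight U must
   contain u itself. *)

Lemma geq_bigmin_cond (I : finType) (P : pred I) (F : I -> nat) m0 i :
  P i -> \big[minn/m0]_(j | P j) F j <= F i.
Proof.
move=> Pi; have: i \in index_enum I by rewrite mem_index_enum.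
elim: (index_enum I) => // j r IHr; rewrite inE big_cons.
case/orP=> [/eqP <-|ir]; first by rewrite Pi geq_minl.
by case: (P j); [apply: leq_trans (geq_minr _ _) (IHr ir) | apply: IHr].
Qed.

Lemma bigmin_attained (I : finType) (P : pred I) (F : I -> nat) i0 :
  P i0 -> exists2 i, P i & \big[minn/F i0]_(j | P j) F j = F i.
Proof.
move=> Pi0; apply: (big_ind (fun m => exists2 i, P i & m = F i)) => //.
- by exists i0.
- move=> _ _ [i Pi ->] [j Pj ->].
  by case: (leqP (F i) (F j)) => _; [exists i|exists j].
- by move=> i Pi; exists i.
Qed.

Section Distances.
Variables (T : finType) (e : rel T).
Hypothesis e_conn : forall u v : T, connect e u v.

Lemma walkb_short u v : exists2 n, n < #|T| & walkb e u v n.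
Proof.
have /connectP [p e_p ->] := e_conn u v.
case/shortenP: e_p => q e_q uniq_q _.
exists (size q); first by have := max_card (mem (u :: q)); rewrite (card_uniqP uniq_q).
by apply/existsP; exists (in_tuple q); rewrite e_q eqxx.
Qed.

Lemma has_walkb u v : has (walkb e u v) (iota 0 #|T|).
Proof. by have [n n_lt walk_n] := walkb_short u v; apply/hasP; exists n; rewrite ?mem_iota. Qed.

Lemma dist_lt_card u v : dist e u v < #|T|.
Proof. by have := has_walkb u v; rewrite has_find size_iota. Qed.

Lemma walkb_dist u v : walkb e u v (dist e u v).
Proof. by have := nth_find 0 (has_walkb u v); rewrite nth_iota ?dist_lt_card. Qed.

Lemma dist_leq u v n : walkb e u v n -> dist e u v <= n.
Proof.
move=> walk_n; case: (ltnP n #|T|) => [n_lt|T_le]; last first.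
  exact: ltnW (leq_trans (dist_lt_card u v) T_le).
rewrite leqNgt; apply/negP => /(before_find 0).
by rewrite nth_iota // walk_n.
Qed.

Lemma walkb_cat u v w m n :
  walkb e u v m -> walkb e v w n -> walkb e u w (m + n).
Proof.
case/existsP=> p /andP[e_p /eqP last_p]; case/existsP=> q /andP[e_q /eqP last_q].
apply/existsP; exists (cat_tuple p q).
by rewrite cat_path e_p last_p e_q last_cat last_p last_q eqxx.
Qed.

Lemma distxx u : dist e u u = 0.
Proof.
by apply/eqP; rewrite -leqn0; apply: dist_leq; apply/existsP; exists [tuple] => /=.
Qed.

Lemma dist_eq0 u v : (dist e u v == 0) = (u == v).
Proof.
apply/eqP/eqP=> [d0|<-]; last exact: distxx.
by have := walkb_dist u v; rewrite d0 => /existsP[p]; rewrite tuple0 => /eqP.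
Qed.

Lemma dist_triangle u v w : dist e u w <= dist e u v + dist e v w.
Proof. by apply/dist_leq/walkb_cat; exact: walkb_dist. Qed.

Lemma ecc_triangle u x : ecc e u <= dist e u x + ecc e x.
Proof.
apply/bigmax_leqP => v _; apply: leq_trans (dist_triangle u x v) _.
by rewrite leq_add2l (leq_bigmax v).
Qed.

Lemma prec_refl u : prec e u u.
Proof. by rewrite /prec distxx. Qed.

Lemma prec_anti u x : prec e u x -> prec e x u -> u = x.
Proof. by move=> /eqP ux /eqP xu; apply/eqP; rewrite -dist_eq0; lia. Qed.

Lemma prec_trans u x y : prec e u x -> prec e x y -> prec e u y.
Proof.
move=> /eqP ux /eqP xy; apply/eqP.
by have := ecc_triangle u y; have := dist_triangle u x y; lia.
Qed.

Lemma Umax_above v : exists2 x, prec e v x & x \in Umax e.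
Proof.
have [x vx x_min] := arg_minnP (ecc e) (prec_refl v).
exists x => //; rewrite inE; apply/forallP => y; apply/implyP => /[dup] xy /eqP xy_ecc.
have := x_min y (prec_trans vx xy); rewrite eq_sym -dist_eq0; lia.
Qed.

Lemma tight_upper_certificateP (U : {set T}) :
  tight_upper_certificate e U <-> forall v, exists2 x, x \in U & prec e v x.
Proof.
rewrite /tight_upper_certificate /eU; split=> tightU v; have := tightU v.
- case: pickP => [x0 x0U [ecc_v]|//].
  have [x xU min_x] := bigmin_attained (fun x => dist e v x + ecc e x) x0U.
  by exists x; rewrite // /prec -ecc_v min_x.
- case=> x xU /eqP vx; case: pickP => [x0 x0U|/(_ x)]; last by rewrite xU.
  congr Some; apply/eqP; rewrite eqn_leq {1}vx geq_bigmin_cond //=.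
  apply: (big_ind (leq (ecc e v))); first exact: ecc_triangle.
    by move=> a b va vb; rewrite leq_min va vb.
  by move=> y _; exact: ecc_triangle.
Qed.

Lemma Umax_tight : tight_upper_certificate e (Umax e).
Proof.
by apply/tight_upper_certificateP => v; have [x vx x_max] := Umax_above v; exists x.
Qed.

Lemma Umax_sub (U : {set T}) : tight_upper_certificate e U -> Umax e \subset U.
Proof.
move/tight_upper_certificateP=> tightU; apply/subsetP => u.
rewrite inE => /forallP u_max; have [x xU ux] := tightU u.
by have /implyP/(_ ux)/eqP<- := u_max x.
Qed.

End Distances.

Theorem proposition2 (T : finType) (e : rel T)
  (e_sym : symmetric e) (e_irr : irreflexive e)
  (e_conn : forall u v : T, connect e u v) :
  ((forall u : T, prec e u u) /\
   (forall u x : T, prec e u x -> prec e x u -> u = x) /\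
   (forall u x y : T, prec e u x -> prec e x y -> prec e u y)) /\
  tight_upper_certificate e (Umax e) /\
  (forall U : {set T}, tight_upper_certificate e U ->
     #|Umax e| <= #|U| /\ (#|U| = #|Umax e| -> U = Umax e)).
Proof.
split; first by split; [|split]; [exact: prec_refl|exact: prec_anti|exact: prec_trans].
split; first exact: Umax_tight.
move=> U /(Umax_sub e_conn) sub_U; split; first exact: subset_leq_card.
by move=> card_U; apply/esym/eqP; rewrite eqEcard sub_U card_U leqnn.
Qed.
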